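(* Local search based on the 1-norm of the inverse has no constant approximation ratio for full row rank matrices: for all integers $r\ge2$ and $n\ge 2r$ and every $K>0$, there exist a matrix $A\in\mathbb{R}^{r\times n}$ of rank $r$ and ordered $r$-subsets $T,T'$ of $\{1,\dots,n\}$ such that $A[:,T]$ is a local minimizer for the 1-norm of the inverse on the set of $r\times r$ nonsingular submatrices of $A$, $A[:,T']$ is nonsingular, and $\|A[:,T]^{-1}\|_1\ge K\,\|A[:,T']^{-1}\|_1$.
   Context: $A[:,T]$ is the submatrix of $A$ formed by the columns indexed by $T$. $\|X\|_1=\sum_{i,j}|X_{ij}|$. For a full row rank $r\times n$ matrix $A$, a nonsingular submatrix $A[:,T]$ is a local minimizer for the 1-norm of the inverse on the set of $r\times r$ nonsingular submatrices of $A$ if $\|A[:,T]^{-1}\|_1$ cannot be decreased by swapping an element of $T$ with an element of its complement in $\{1,\dots,n\}$ (among swaps yielding a nonsingular submatrix). For any $T'$ with $A[:,T']$ nonsingular, placing $A[:,T']^{-1}$ in rows $T'$ and zeros elsewhere gives a matrix $H$ with $AH=I_r$, so the conclusion shows the ratio of the local-search output's 1-norm to the optimum is unbounded. *)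

From mathcomp Require Import all_boot all_order all_algebra.
From mathcomp Require Import reals.
Set Implicit Arguments. Unset Strict Implicit. Unset Printing Implicit Defensive.
Import Order.TTheory GRing.Theory Num.Theory.
Local Open Scope ring_scope.

Definition mnorm1 (R : numDomainType) (m n : nat) (X : 'M[R]_(m, n)) : R :=
  \sum_(i < m) \sum_(j < n) `|X i j|.

(* An ordered r-subset of {1..n} is an injective map T : 'I_r -> 'I_n;
   A[:,T] is colsub T A. *)

Definition swap_idx (r n : nat) (T : 'I_r -> 'I_n) (i : 'I_r) (j : 'I_n)
  : 'I_r -> 'I_n := fun k => if k == i then j else T k.

Definition local_min_inv1 (R : realFieldType) (r n : nat)
  (A : 'M[R]_(r, n)) (T : 'I_r -> 'I_n) : Prop :=
  injective T /\ colsub T A \in unitmx /\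
  forall (i : 'I_r) (j : 'I_n), (forall k, T k != j) ->
    colsub (swap_idx T i j) A \in unitmx ->
    mnorm1 (invmx (colsub T A)) <= mnorm1 (invmx (colsub (swap_idx T i j) A)).

From mathcomp Require Import all_boot all_order all_algebra.
From mathcomp Require Import reals.
From mathcomp Require Import ring lra zify.
Import Order.TTheory GRing.Theory Num.Theory.
Local Open Scope ring_scope.

(* Take A = [I | c S | 0] with S an invertible matrix whose entries are all
   +1 or -1, and T the identity block.  Swapping a column of the identity for a
   column whose entries all have the same absolute value gives a matrix whose
   inverse has 1-norm at least r = ||I^-1||_1, while swapping in a zero column
   gives a singular matrix; so T is a local minimizer.  But the block T' = c S
   has ||(c S)^-1||_1 = ||S^-1||_1 / c, which is arbitrarily small for large
   c. *)

Section EntrywiseNorm.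
Variable R : numDomainType.

Lemma mnorm1_ge0 m n (X : 'M[R]_(m, n)) : 0 <= mnorm1 X.
Proof. by apply: sumr_ge0 => i _; apply: sumr_ge0. Qed.

Lemma mnorm1Z m n (a : R) (X : 'M[R]_(m, n)) :
  mnorm1 (a *: X) = `|a| * mnorm1 X.
Proof.
rewrite /mnorm1 mulr_sumr; apply: eq_bigr => i _; rewrite mulr_sumr.
by apply: eq_bigr => j _; rewrite mxE normrM.
Qed.

Lemma mnorm1_scalar1 r : mnorm1 (1%:M : 'M[R]_r) = r%:R.
Proof.
rewrite /mnorm1 (eq_bigr (fun _ => 1)) ?sumr_const ?card_ord // => i _.
rewrite (bigD1 i) //= big1 ?addr0 => [|j /negbTE ji];
  rewrite mxE ?eqxx ?normr1 //.
by rewrite eq_sym ji normr0.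
Qed.

Lemma sum_norm_ge_pair n (f : 'I_n -> R) (a b : 'I_n) :
  a != b -> `|f a| + `|f b| <= \sum_l `|f l|.
Proof.
move=> ab; rewrite (bigD1 a) //= (bigD1 b) 1?eq_sym //= addrA lerDl.
exact: sumr_ge0.
Qed.

(* [N := M^-1] agrees with the identity off column [i], and
   [N k i * M i i = - M k i] for [k != i]; so each of the [r - 1] rows [k != i]
   of [N] has 1-norm at least 2. *)
Lemma mnorm1_invmx_col_update r (M : 'M[R]_r) (i : 'I_r) :
  (2 <= r)%N -> M \in unitmx ->
  (forall p l, l != i -> M p l = (p == l)%:R) ->
  (forall p, `|M i i| <= `|M p i|) ->
  r%:R <= mnorm1 (invmx M).
Proof.
move=> r2 M_unit M_id Mii_min; set N := invmx M.
have NM k l : \sum_p N k p * M p l = (k == l)%:R.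
  by have /matrixP/(_ k l) := mulVmx M_unit; rewrite !mxE.
have N_id k l : l != i -> N k l = (k == l)%:R.
  move=> li; rewrite -NM (bigD1 l) //= big1 ?addr0 => [|p pl].
    by rewrite M_id // eqxx mulr1.
  by rewrite M_id // (negbTE pl) mulr0.
have NM_i k : N k i * M i i + (k != i)%:R * M k i = (k == i)%:R.
  rewrite -NM (bigD1 i) //=; congr (_ + _).
  have [->|ki] := eqVneq k i.
    rewrite /= mul0r big1 // => p pi.
    by rewrite N_id // eq_sym (negbTE pi) mul0r.
  rewrite /= mul1r (bigD1 k) //= N_id // eqxx mul1r big1 ?addr0 //.
  by move=> p /andP[pi pk]; rewrite N_id // eq_sym (negbTE pk) mul0r.
have Mii_gt0 : 0 < `|M i i|.
  rewrite normr_gt0; apply/eqP => Mii0.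
  move: (NM_i i); rewrite Mii0 !mulr0 addr0 eqxx => /eqP.
  by rewrite eq_sym oner_eq0.
have Nki_ge1 k : k != i -> 1 <= `|N k i|.
  move=> ki; rewrite -(ler_pM2r Mii_gt0) mul1r -normrM.
  move: (NM_i k); rewrite ki (negbTE ki) mul1r => /eqP.
  by rewrite addr_eq0 => /eqP->; rewrite normrN.
have row_ge2 k : k != i -> 2%:R <= \sum_l `|N k l|.
  move=> ki; apply: le_trans (@sum_norm_ge_pair _ (N k) _ _ ki).
  by rewrite N_id // eqxx normr1 -[2%:R]/(1 + 1) lerD2l Nki_ge1.
apply: (@le_trans _ _ (\sum_(k | k != i) 2%:R)).
  by rewrite sumr_const cardC1 card_ord -mulrnA ler_nat; lia.
rewrite /mnorm1 [leRHS](bigD1 i) //= ler_wpDl ?ler_sum //.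
exact: sumr_ge0.
Qed.

End EntrywiseNorm.

Lemma mxrank_colsub_le (F : fieldType) m n p (g : 'I_p -> 'I_n)
    (A : 'M[F]_(m, n)) :
  (\rank (colsub g A) <= \rank A)%N.
Proof. by rewrite -{1}[A]mulmx1 -mulmx_colsub mxrankM_maxl. Qed.

Lemma mxrank_colsub_unit (F : fieldType) r n (T : 'I_r -> 'I_n)
    (A : 'M[F]_(r, n)) :
  colsub T A \in unitmx -> \rank A = r.
Proof.
move=> /mxrank_unit AT; apply/eqP; rewrite eqn_leq rank_leq_row /=.
by rewrite -{1}AT mxrank_colsub_le.
Qed.

(* The all-ones matrix minus twice the identity is singular for [r = 2];
   keeping the [(0, 0)] entry equal to 1 makes it invertible for every [r]. *)
Definition sign_mx (R : numDomainType) r : 'M[R]_r :=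
  \matrix_(p, q) if (p == q) && (val q != 0%N) then -1 else 1.

Lemma normr_sign_mx (R : numDomainType) r p q : `|sign_mx R r p q| = 1.
Proof. by rewrite mxE; case: ifP; rewrite ?normrN normr1. Qed.

Lemma sign_mx_unit (R : numFieldType) r : (0 < r)%N -> sign_mx R r \in unitmx.
Proof.
move=> r_gt0; rewrite -row_free_unit; apply: inj_row_free => x x_ker.
pose S := \sum_p x 0 p.
have x_sign q : (x *m sign_mx R r) 0 q = S - (val q != 0%N)%:R * 2%:R * x 0 q.
  rewrite mxE (bigD1 q) //= [S](bigD1 q) //= mxE eqxx.
  rewrite (eq_bigr (fun p => x 0 p)) => [|p pq]; last first.
    by rewrite mxE (negbTE pq) mulr1.
  by case: (val q != 0%N); rewrite /= ?mulr1 ?mulrN1; ring.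
pose q0 : 'I_r := Ordinal r_gt0.
have S0 : S = 0.
  by have := x_sign q0; rewrite x_ker mxE /= mulr0n !mul0r subr0 => <-.
have xq0 q : q != q0 -> x 0 q = 0.
  move=> qq0; have := x_sign q; rewrite x_ker mxE S0 sub0r.
  have -> : val q != 0%N by apply: contraNneq qq0 => q_0; apply/eqP/val_inj.
  by move/eqP; rewrite eq_sym oppr_eq0 mul1r mulf_eq0 pnatr_eq0 /= => /eqP.
apply/rowP => q; rewrite mxE; have [->|] := eqVneq q q0; last exact: xq0.
by rewrite -S0 [S](bigD1 q0) //= big1 ?addr0 // => p; apply: xq0.
Qed.

Lemma local_min_inv1_of_colsub1 (R : realFieldType) r n (A : 'M[R]_(r, n))
    (T : 'I_r -> 'I_n) :
  (2 <= r)%N -> injective T -> colsub T A = 1%:M ->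
  (forall j, (forall k, T k != j) -> forall p q, `|A p j| = `|A q j|) ->
  local_min_inv1 A T.
Proof.
move=> r2 T_inj AT A_cols; split=> //; split; first by rewrite AT unitmx1.
move=> i j jT M_unit; rewrite AT invmx1 mnorm1_scalar1.
apply: (@mnorm1_invmx_col_update _ _ _ i) => // [p l li | p].
  by have /matrixP/(_ p l) := AT; rewrite !mxE /swap_idx (negbTE li).
by rewrite !mxE /swap_idx eqxx (A_cols j jT i p).
Qed.

(* The block matrix [I_r | B | 0] of width [n]. *)
Definition id_block_mx (R : nzRingType) r n (B : 'M[R]_r) : 'M[R]_(r, n) :=
  \matrix_(p, l) if (l < r)%N then (p == l :> nat)%:R
                 else oapp (B p) 0 (insub (l - r)%N).
Arguments id_block_mx {R r} n B.

Section IdBlockMatrix.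
Variables (R : numDomainType) (r n : nat) (B : 'M[R]_r).
Let A := id_block_mx n B.

Lemma colsub_id_block_mx_l (h : (r <= n)%N) : colsub (widen_ord h) A = 1%:M.
Proof. by apply/matrixP => p l; rewrite !mxE /= ltn_ord. Qed.

Lemma colsub_id_block_mx_r (h : (r + r <= n)%N) :
  colsub (widen_ord h \o @rshift r r) A = B.
Proof.
apply/matrixP => p l; rewrite !mxE /= ltnNge leq_addr /= addKn.
by rewrite (valK l).
Qed.

Lemma id_block_mx_col_norm (j : 'I_n) (p q : 'I_r) :
  (forall k p q, `|B p k| = `|B q k|) -> (r <= j)%N -> `|A p j| = `|A q j|.
Proof.
move=> B_cols rj; rewrite !mxE ltnNge rj /=.
by case: insubP => [k _ _ | _] /=; rewrite ?B_cols ?normr0.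
Qed.

End IdBlockMatrix.

Lemma local_min_inv1_id_block_mx (R : realFieldType) r n (h : (r <= n)%N)
    (B : 'M[R]_r) :
  (2 <= r)%N -> (forall k p q, `|B p k| = `|B q k|) ->
  local_min_inv1 (id_block_mx n B) (widen_ord h).
Proof.
move=> r2 B_cols; apply: local_min_inv1_of_colsub1 => //.
- by move=> a b /(congr1 val) /= /val_inj.
- exact: colsub_id_block_mx_l.
move=> j jT p q; apply: id_block_mx_col_norm => //; rewrite leqNgt.
by apply/negP => jr; have /eqP[] := jT (Ordinal jr); apply: val_inj.
Qed.

Theorem theorem6p5 (R : realType) (r n : nat) (K : R) :
  (2 <= r)%N -> (2 * r <= n)%N -> 0 < K ->
  exists (A : 'M[R]_(r, n)) (T T' : 'I_r -> 'I_n),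
    \rank A = r /\
    local_min_inv1 A T /\
    injective T' /\ colsub T' A \in unitmx /\
    mnorm1 (invmx (colsub T A)) >= K * mnorm1 (invmx (colsub T' A)).
Proof.
move=> r2 rn K_gt0.
have r_le_n : (r <= n)%N by lia.
have rr_le_n : (r + r <= n)%N by lia.
pose S := sign_mx R r; pose m := mnorm1 (invmx S); pose c := K * m + 1.
have Km_ge0 : 0 <= K * m by apply: mulr_ge0; [exact: ltW | exact: mnorm1_ge0].
have c_gt0 : 0 < c by rewrite /c; lra.
have S_unit : S \in unitmx by apply: sign_mx_unit; lia.
have cS_unit : c *: S \in unitmx by rewrite unitmxZ // unitfE gt_eqF.
pose A := id_block_mx n (c *: S).
pose T' := widen_ord rr_le_n \o @rshift r r.
have AT' : colsub T' A = c *: S by exact: colsub_id_block_mx_r.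
exists A, (widen_ord r_le_n), T'; split.
  by apply: (mxrank_colsub_unit _ _ _ T'); rewrite AT'.
split.
  apply: local_min_inv1_id_block_mx => // k p q.
  by rewrite mxE [in RHS]mxE !normrM !normr_sign_mx.
split; first by move=> a b /(congr1 val) /= /addnI /val_inj.
split; first by rewrite AT'.
rewrite colsub_id_block_mx_l invmx1 mnorm1_scalar1 AT' invmxZ // mnorm1Z.
have r_ge1 : 1 <= r%:R :> R by rewrite ler1n; lia.
rewrite gtr0_norm ?invr_gt0 // -/m mulrCA ler_pdivrMl // /c.
nra.
Qed.
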